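(* Let $d\geq 1$ and let $G$ be a graph that is $(d+1)$-connected and redundantly rigid in $\mathbb{R}^d$. Suppose that $G$ is $M$-separable in $\mathbb{R}^d$ and let $H_1,\dots,H_q$ be the $M$-connected components of $G$ in $\mathbb{R}^d$. Then $\sum_{i=1}^q\mathrm{dof}_d(H_i)\geq\binom{d+1}{2}$.
   Context: A graph is $k$-connected if it has at least $k+1$ vertices and remains connected after deleting fewer than $k$ vertices. The $d$-dimensional rigidity matroid $\mathcal{R}_d(G)$ on $E(G)$ is given by linear independence of rows of the rigidity matrix of a generic realization (row of edge $uv$: $p(u)-p(v)$ in the columns of $u$, $p(v)-p(u)$ in those of $v$, zeros elsewhere), with rank function $r_d$. $G$ is rigid in $\mathbb{R}^d$ if (for $|V|\geq d+1$) $r_d(G)=d|V|-\binom{d+1}{2}$, and redundantly rigid if $G-e$ is rigid for every edge $e$. $G$ is $M$-separable in $\mathbb{R}^d$ if $\mathcal{R}_d(G)$ is not connected; its $M$-connected components are the subgraphs induced by the edge sets of the connected components of $\mathcal{R}_d(G)$ (equivalence classes of the relation ''$e=f$ or $e,f$ lie in a common circuit''). For a graph $H$, $\mathrm{dof}_d(H)=d|V(H)|-\binom{d+1}{2}-r_d(H)$. *)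

From HB Require Import structures.
From mathcomp Require Import all_boot all_order all_algebra.
From mathcomp Require Import boolp reals.
Set Implicit Arguments. Unset Strict Implicit. Unset Printing Implicit Defensive.
Import Order.TTheory GRing.Theory Num.Theory.

(* A (finite simple) graph is a vertex finType V with an edge set
   E : {set {set V}} all of whose members have exactly two elements. *)

Section Rigidity.
Variables (R : realType) (V : finType) (d : nat).

Definition other_end (S : {set V}) (w : V) : V := odflt w [pick x in S :\ w].

(* Rigidity matrix of the realization p, restricted to the rows of the edge
   set F: rows are indexed by all subsets S of V (rows of S \notin F are zero),
   columns by pairs (vertex, coordinate). *)
Definition rigidity_matrix (p : V -> 'I_d -> R) (F : {set {set V}}) :
  'M[R]_(#|{: {set V}}|, #|{: V * 'I_d}|) :=
  \matrix_(i, j)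
    let S := enum_val i in let wk := enum_val j in
    if (S \in F) && (wk.1 \in S) then
      (p wk.1 wk.2 - p (other_end S wk.1) wk.2)%R
    else 0%R.

Definition rank_at (p : V -> 'I_d -> R) (F : {set {set V}}) : nat :=
  \rank (rigidity_matrix p F).

Definition rank_attained (F : {set {set V}}) : pred nat :=
  fun n => `[< exists p, rank_at p F = n >].

Lemma rank_attained_ex F : exists n, rank_attained F n.
Proof. by exists (rank_at (fun _ _ => 0%R) F); apply/asboolT; exists (fun _ _ => 0%R). Qed.

Lemma rank_attained_le F n : rank_attained F n -> n <= #|{: V * 'I_d}|.
Proof. by move=> /asboolP [p <-]; exact: rank_leq_col. Qed.

(* r_d(F): the rank of the rows F in the rigidity matrix of a generic
   realization = the maximum of this rank over all realizations. *)
Definition rd (F : {set {set V}}) : nat :=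
  ex_maxn (@rank_attained_ex F) (@rank_attained_le F).

Definition circuit (E C : {set {set V}}) : bool :=
  [&& C \subset E, rd C < #|C| & [forall D : {set {set V}}, (D \proper C) ==> (rd D == #|D|)]].

Definition mrel (E : {set {set V}}) : rel {set V} :=
  fun e f => (e == f) || [exists C : {set {set V}}, [&& circuit E C, e \in C & f \in C]].

Definition M_connected (E : {set {set V}}) : bool :=
  [forall e in E, forall f in E, mrel E e f].

Definition M_separable (E : {set {set V}}) : bool := ~~ M_connected E.

Definition M_components (E : {set {set V}}) : {set {set {set V}}} :=
  equivalence_partition (mrel E) E.

Definition verts (F : {set {set V}}) : {set V} := \bigcup_(e in F) e.

Definition dof (F : {set {set V}}) : int :=
  ((d * #|verts F|)%:Z - ('C(d.+1, 2))%:Z - (rd F)%:Z)%R.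

Definition rigid (E : {set {set V}}) : Prop :=
  if d.+1 <= #|V| then rd E = d * #|V| - 'C(d.+1, 2)
  else forall u v : V, u != v -> [set u; v] \in E.

Definition redundantly_rigid (E : {set {set V}}) : Prop :=
  forall e, e \in E -> rigid (E :\ e).

Definition connected_minus (E : {set {set V}}) (X : {set V}) : Prop :=
  forall u v : V, u \notin X -> v \notin X ->
    connect (fun x y => [&& x \notin X, y \notin X & [set x; y] \in E]) u v.

Definition k_connected (k : nat) (E : {set {set V}}) : Prop :=
  k.+1 <= #|V| /\ forall X : {set V}, #|X| < k -> connected_minus E X.

End Rigidity.

(* The row matroid of the rigidity matrix at a single realization that is
   generic for all edge sets at once (along a line of realizations a rank drops
   only at the roots of a nonzero polynomial) has rank function r_d, so r_d is
   submodular and, by circuit elimination, "lying in a common circuit" is an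
   equivalence whose classes H_1, ..., H_q satisfy sum r_d(H_i) <= r_d(G).
   The C(d+1,2) independent trivial motions of a realization containing an
   affine frame give r_d(G) <= d|V| - C(d+1,2).  Redundant rigidity puts every
   edge in a circuit, and a circuit spans more than d vertices (edges on at most
   d vertices are independent: put the vertices on distinct coordinate axes),
   so |V(H_i)| >= d+1.  By (d+1)-connectivity each H_i shares at least d+1
   vertices with the other components, and double counting gives
   2|V| + q(d+1) <= 2 sum |V(H_i)|.  Hence
   sum dof(H_i) = d sum |V(H_i)| - q C(d+1,2) - sum r_d(H_i) >= d|V| - r_d(G)
   >= C(d+1,2). *)

From HB Require Import structures.
From mathcomp Require Import all_boot all_order all_algebra.
From mathcomp Require Import boolp reals.
From mathcomp Require Import zify ring.
Set Implicit Arguments. Unset Strict Implicit. Unset Printing Implicit Defensive.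
Import Order.TTheory GRing.Theory Num.Theory.

Section RankMatroid.
Variables (T : finType) (r : {set T} -> nat).
Hypothesis rank_le_card : forall X, r X <= #|X|.
Hypothesis rank_mono : forall X Y : {set T}, X \subset Y -> r X <= r Y.
Hypothesis rank_submod : forall X Y : {set T}, r (X :|: Y) + r (X :&: Y) <= r X + r Y.

Definition is_circuit (C : {set T}) : bool :=
  (r C < #|C|) && [forall D : {set T}, (D \proper C) ==> (r D == #|D|)].

Lemma is_circuitP C :
  reflect (r C < #|C| /\ forall D : {set T}, D \proper C -> r D = #|D|) (is_circuit C).
Proof.
apply: (iffP andP) => -[dC mC]; split=> //.
  by move=> D pD; apply/eqP; move/forallP/(_ D)/implyP: mC; apply.
by apply/forallP => D; apply/implyP => /mC ->.
Qed.

Lemma indep_subset (B Z : {set T}) : r B = #|B| -> Z \subset B -> r Z = #|Z|.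
Proof.
move=> rB sZB; have := rank_submod Z (B :\: Z).
have -> : Z :&: (B :\: Z) = set0 by apply/setP=> x; rewrite !inE; case: (x \in Z).
rewrite -{1}(setIidPr sZB) setID rB => le_B.
have := rank_le_card (B :\: Z); have := cardsDS sZB; have := subset_leq_card sZB.
by have := rank_le_card Z; lia.
Qed.

Lemma circuit_not_indep (B C : {set T}) : r B = #|B| -> is_circuit C -> ~~ (C \subset B).
Proof.
by move=> iB /is_circuitP [dC _]; apply/negP => /(indep_subset iB) rC; rewrite rC ltnn in dC.
Qed.


Lemma exists_circuit (X : {set T}) : r X < #|X| -> exists2 C : {set T}, C \subset X & is_circuit C.
Proof.
move=> dX.
have exC : exists n, [exists C : {set T}, [&& C \subset X, r C < #|C| & #|C| == n]].
  by exists #|X|; apply/existsP; exists X; rewrite subxx dX eqxx.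
case: (ex_minnP exC) => _ /existsP [C /and3P [sCX dC /eqP <-]] minC.
exists C => //; apply/is_circuitP; split=> // D pDC.
apply/eqP; rewrite eqn_leq rank_le_card leqNgt; apply/negP => dD.
have : #|C| <= #|D|.
  by apply: minC; apply/existsP; exists D; rewrite dD eqxx (subset_trans (proper_sub pDC)).
by rewrite leqNgt proper_card.
Qed.

Lemma rank_setU_spanned (A B : {set T}) :
  {in A, forall x, r (x |: B) <= r B} -> r (B :|: A) <= r B.
Proof.
rewrite -(set_enum A); elim: (enum A) => [|a s IH] spanned.
  by rewrite set_nil setU0.
rewrite set_cons in spanned *.
have le_s : r (B :|: [set:: s]) <= r B.
  by apply: IH => x sx; apply: spanned; rewrite setU1r.
have le_a : r (a |: B) <= r B by apply: spanned; rewrite setU11.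
have := rank_submod (B :|: [set:: s]) (a |: B).
have -> : B :|: [set:: s] :|: (a |: B) = B :|: (a |: [set:: s]).
  by apply/setP=> x; rewrite !inE; case: (x \in B); case: (x == a); rewrite ?orbT ?orbF.
have : r B <= r ((B :|: [set:: s]) :&: (a |: B)).
  by apply: rank_mono; rewrite subsetI subsetUl subsetUr.
lia.
Qed.

Lemma exists_basis (X : {set T}) :
  exists B : {set T}, [/\ B \subset X, r B = #|B| & r B = r X].
Proof.
have exB : exists n, [exists B : {set T}, [&& B \subset X, r B == #|B| & #|B| == n]].
  exists 0; apply/existsP; exists set0; rewrite sub0set cards0 eqxx andbT.
  by have := rank_le_card set0; rewrite cards0 leqn0.
have boundB n : [exists B : {set T}, [&& B \subset X, r B == #|B| & #|B| == n]] -> n <= #|X|.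
  by move=> /existsP [B /and3P [sBX _ /eqP <-]]; exact: subset_leq_card.
case: (ex_maxnP exB boundB) => _ /existsP [B /and3P [sBX /eqP iB /eqP <-]] maxB.
exists B; split=> //; apply/eqP; rewrite eqn_leq rank_mono //=.
have spanned : {in X, forall x, r (x |: B) <= r B}.
  move=> x xX; case xB: (x \in B); first by rewrite (setUidPr _) ?sub1set.
  rewrite leqNgt; apply/negP => lt_xB.
  have : #|x |: B| <= #|B|.
    apply: maxB; apply/existsP; exists (x |: B).
    rewrite subUset sub1set xX sBX eqxx andbT eqn_leq rank_le_card.
    by rewrite /= cardsU1 xB add1n -iB lt_xB.
  by rewrite cardsU1 xB ltnn.
by apply: leq_trans (rank_setU_spanned spanned); rewrite rank_mono ?subsetUr.
Qed.

Lemma rank_delete_in_circuit (X C : {set T}) (e : T) :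
  C \subset X -> e \in C -> is_circuit C -> r (X :\ e) = r X.
Proof.
move=> sCX eC /is_circuitP [dC mC].
apply/eqP; rewrite eqn_leq rank_mono ?subD1set //=.
have := rank_submod (X :\ e) C.
have -> : (X :\ e) :|: C = X.
  apply/setP=> x; rewrite !inE; case: eqP => [->|_] /=; first by rewrite eC (subsetP sCX).
  by case: (boolP (x \in C)) => [/(subsetP sCX) ->|_]; rewrite ?orbF.
have -> : (X :\ e) :&: C = C :\ e by rewrite setIC setIDA (setIidPl sCX).
have := mC _ (properD1 eC); have := cardsD1 e C; rewrite eC; lia.
Qed.

Lemma circuit_of_rank_delete (X : {set T}) (e : T) :
  e \in X -> r (X :\ e) = r X -> exists C : {set T}, [/\ C \subset X, e \in C & is_circuit C].
Proof.
move=> eX rXe; have [B [sB iB rB]] := exists_basis (X :\ e).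
have eB : e \notin B by apply/negP => /(subsetP sB); rewrite !inE eqxx.
have sBeX : e |: B \subset X by rewrite subUset sub1set eX (subset_trans sB) ?subD1set.
have : r (e |: B) < #|e |: B|.
  by rewrite cardsU1 eB add1n ltnS -iB rB rXe rank_mono.
case/exists_circuit => C sC cC; exists C; split=> //; first exact: subset_trans sC sBeX.
apply/negPn/negP => eC; apply: (negP (circuit_not_indep iB cC)).
by apply/subsetP => x xC; move: (subsetP sC x xC) eC; rewrite !inE; case: eqP => [<-|]; rewrite ?xC.
Qed.

Lemma circuit_sub_eq (C D : {set T}) :
  is_circuit C -> is_circuit D -> D \subset C -> D = C.
Proof.
move=> /is_circuitP [_ mC] /is_circuitP [dD _] /eqVproper [//|/mC rD].
by rewrite rD ltnn in dD.
Qed.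

Lemma circuit_not_sub (C D : {set T}) x :
  is_circuit C -> is_circuit D -> x \in C -> x \notin D -> ~~ (D \subset C).
Proof. by move=> cC cD xC xD; apply/negP => /(circuit_sub_eq cC cD) DC; rewrite DC xC in xD. Qed.

Lemma strong_circuit_elim (C1 C2 : {set T}) (e f : T) :
  is_circuit C1 -> is_circuit C2 -> e \in C1 -> e \in C2 -> f \in C1 -> f \notin C2 ->
  exists C : {set T}, [/\ C \subset (C1 :|: C2) :\ e, f \in C & is_circuit C].
Proof.
move=> c1 c2 e1 e2 f1 f2; set U := C1 :|: C2.
have rUf : r (U :\ f) = r U by apply: (rank_delete_in_circuit _ f1 c1); exact: subsetUl.
have rUfe : r ((U :\ f) :\ e) = r (U :\ f).
  apply: (rank_delete_in_circuit _ e2 c2); apply/subsetP=> x xC2.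
  by rewrite !inE xC2 orbT andbT; apply: contraNneq f2 => <-.
apply: circuit_of_rank_delete.
  by rewrite !inE f1 andbT; apply: contraNneq f2 => ->.
apply/eqP; rewrite eqn_leq rank_mono ?subD1set //= setDDl setUC -setDDl rUfe rUf.
by rewrite rank_mono ?subD1set.
Qed.

Lemma circuit_trans (C1 C2 : {set T}) (e f g : T) :
  is_circuit C1 -> is_circuit C2 -> e \in C1 -> f \in C1 -> f \in C2 -> g \in C2 ->
  exists C : {set T}, [/\ C \subset C1 :|: C2, e \in C, g \in C & is_circuit C].
Proof.
have [n] := ubnP #|C1 :|: C2|.
elim: n C1 C2 f => // n IH C1 C2 f ltU c1 c2 e1 f1 f2 g2.
have [g1|g1] := boolP (g \in C1); first by exists C1; rewrite subsetUl.
have [e2|e2] := boolP (e \in C2); first by exists C2; rewrite subsetUr.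
have [C3 [s3 e3 c3]] := strong_circuit_elim c1 c2 f1 f2 e1 e2.
have [g3|g3] := boolP (g \in C3).
  by exists C3; split=> //; apply: subset_trans s3 (subD1set _ _).
have f3 : f \notin C3 by apply: contraTN s3 => f3; apply/subsetPn; exists f; rewrite ?setD11.
have [h h3 h1] := subsetPn (circuit_not_sub c1 c3 f1 f3).
have h2 : h \in C2 by move: (subsetP s3 h h3); rewrite !inE (negbTE h1) => /andP [].
have [C4 [s4 g4 c4]] := strong_circuit_elim c2 c3 h2 h3 g2 g3.
have h4 : h \notin C4 by apply: contraTN s4 => h4; apply/subsetPn; exists h; rewrite ?setD11.
have [x x4 x2] := subsetPn (circuit_not_sub c2 c4 h2 h4).
have x1 : x \in C1.
  move: (subsetP s4 x x4); rewrite !inE (negbTE x2) => /andP [_ x3].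
  by move: (subsetP s3 x x3); rewrite !inE (negbTE x2) orbF => /andP [].
have sU : C1 :|: C4 \subset (C1 :|: C2) :\ h.
  rewrite subUset; apply/andP; split.
    by apply/subsetP => y y1; rewrite !inE y1 andbT; apply: contraNneq h1 => <-.
  apply: (subset_trans s4); apply/subsetP => y; rewrite !inE => /andP [-> /orP [y2|y3]].
    by rewrite y2 orbT.
  by move: (subsetP s3 y y3); rewrite !inE => /andP [_ ->].
have ltU' : #|C1 :|: C4| < n.
  have := subset_leq_card sU; move: ltU; rewrite (cardsD1 h (C1 :|: C2)) inE h2 orbT add1n ltnS.
  by move=> ltUh le_sU; exact: leq_ltn_trans le_sU ltUh.
have [C [sC eC gC cC]] := IH C1 C4 x ltU' c1 c4 e1 x1 x4 g4.
exists C; split=> //; apply: (subset_trans sC); apply: (subset_trans sU); exact: subD1set.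
Qed.

Lemma rank_union_separated (X Y : {set T}) :
  [disjoint X & Y] ->
  (forall C : {set T}, C \subset X :|: Y -> is_circuit C -> (C \subset X) || (C \subset Y)) ->
  r X + r Y <= r (X :|: Y).
Proof.
move=> dXY sepXY.
have [BX [sX iX <-]] := exists_basis X; have [BY [sY iY <-]] := exists_basis Y.
have dB : [disjoint BX & BY] by rewrite (disjointWl sX) // (disjointWr sY).
suff iB : r (BX :|: BY) = #|BX :|: BY|.
  have cardB : #|BX :|: BY| = #|BX| + #|BY|.
    by rewrite -cardsUI (disjoint_setI0 dB) cards0 addn0.
  by rewrite iX iY -cardB -iB rank_mono ?setUSS.
apply/eqP; rewrite eqn_leq rank_le_card leqNgt; apply/negP => /exists_circuit [C sC cC].
case/orP: (sepXY C (subset_trans sC (setUSS sX sY)) cC) => [sCX|sCY].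
  apply: (negP (circuit_not_indep iX cC)); apply/subsetP => x xC.
  move: (subsetP sC x xC); rewrite inE => /orP [//|xBY].
  by move: (subsetP sY x xBY); rewrite (disjointFr dXY (subsetP sCX x xC)).
apply: (negP (circuit_not_indep iY cC)); apply/subsetP => x xC.
move: (subsetP sC x xC); rewrite inE => /orP [xBX|//].
by move: (subsetP sX x xBX); rewrite (disjointFl dXY (subsetP sCY x xC)).
Qed.

Lemma circuit_neq0 (C : {set T}) : is_circuit C -> C != set0.
Proof. by case/is_circuitP => dC _; rewrite -card_gt0; exact: leq_ltn_trans (leq0n _) dC. Qed.

Lemma sum_rank_partition_le (P : {set {set T}}) (D : {set T}) :
  partition P D ->
  (forall C : {set T}, C \subset D -> is_circuit C -> exists2 H, H \in P & C \subset H) ->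
  \sum_(H in P) r H <= r D.
Proof.
have [n] := ubnP #|P|; elim: n P D => // n IH P D ltP partP blocks.
have [->|[B BP]] := set_0Vmem P; first by rewrite big_set0.
have tiP := partition_trivIset partP; have sBD := partitionS partP BP.
have sHDB H : H \in P -> H != B -> H \subset D :\: B.
  move=> HP HB; rewrite subsetD (partitionS partP HP) disjoint_sym.
  by apply: (trivIsetP tiP) => //; rewrite eq_sym.
have DE : B :|: (D :\: B) = D by rewrite -{1}(setIidPr sBD) setID.
rewrite (big_setD1 B) //= -DE; apply: leq_trans (rank_union_separated _ _).
- rewrite leq_add2l; apply: IH (partitionD1 partP BP) _.
    by rewrite (cardsD1 B P) BP in ltP.
  move=> C sC cC; have [H HP sCH] := blocks C (subset_trans sC (subsetDl _ _)) cC.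
  exists H => //; rewrite !inE HP andbT; apply: contraNneq (circuit_neq0 cC) => HB.
  rewrite -subset0; apply/subsetP => x xC.
  by move: (subsetP sC x xC) (subsetP sCH x xC); rewrite HB !inE => /andP [/negbTE ->].
- by rewrite disjoint_sym; apply/setDidPl; rewrite setDDl setUid.
move=> C; rewrite DE => sCD cC; have [H HP sCH] := blocks C sCD cC.
have [<-|HB] := eqVneq H B; first by rewrite sCH.
by rewrite (subset_trans sCH (sHDB H HP HB)) orbT.
Qed.

Definition circuit_rel (E : {set T}) : rel T := fun e f =>
  (e == f) || [exists C : {set T}, [&& (C \subset E) && is_circuit C, e \in C & f \in C]].

Lemma circuit_relP (E C : {set T}) e f :
  C \subset E -> is_circuit C -> e \in C -> f \in C -> circuit_rel E e f.
Proof. by move=> sCE cC eC fC; apply/orP; right; apply/existsP; exists C; rewrite sCE cC eC fC. Qed.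

Lemma circuit_rel_equiv (E : {set T}) : equivalence_rel (circuit_rel E).
Proof.
have sym e f : circuit_rel E e f -> circuit_rel E f e.
  case/orP => [/eqP ->|/existsP [C /and3P [cC eC fC]]]; first by rewrite /circuit_rel eqxx.
  by apply/orP; right; apply/existsP; exists C; rewrite cC eC fC.
have trans f e g : circuit_rel E e f -> circuit_rel E f g -> circuit_rel E e g.
  case/orP => [/eqP -> //|/existsP [C1 /and3P [/andP [s1 c1] e1 f1]]].
  case/orP => [/eqP <-|/existsP [C2 /and3P [/andP [s2 c2] f2 g2]]].
    exact: circuit_relP s1 c1 e1 f1.
  have [C [sC eC gC cC]] := circuit_trans c1 c2 e1 f1 f2 g2.
  by apply: circuit_relP cC eC gC; rewrite (subset_trans sC) // subUset s1 s2.
move=> x y z; split; first by rewrite /circuit_rel eqxx.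
by move=> xy; apply/idP/idP => [/(trans _ _ _ (sym _ _ xy))|/(trans _ _ _ xy)].
Qed.

Lemma circuit_sub_pblock (E C : {set T}) c :
  C \subset E -> is_circuit C -> c \in C ->
  C \subset pblock (equivalence_partition (circuit_rel E) E) c.
Proof.
move=> sCE cC cC'; apply/subsetP => x xC.
rewrite (pblock_equivalence_partition (in3W (circuit_rel_equiv E))) ?(subsetP sCE) //.
exact: circuit_relP sCE cC cC' xC.
Qed.

Lemma sum_rank_components_le (E : {set T}) :
  \sum_(H in equivalence_partition (circuit_rel E) E) r H <= r E.
Proof.
set P := equivalence_partition _ E.
have partP : partition P E := equivalence_partitionP (in3W (circuit_rel_equiv E)).
apply: (sum_rank_partition_le partP) => C sCE cC.
have [c cC'] := set0Pn _ (circuit_neq0 cC).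
exists (pblock P c); last exact: circuit_sub_pblock.
by rewrite pblock_mem // (cover_partition partP) (subsetP sCE).
Qed.

End RankMatroid.

Section GenericConfiguration.
Local Open Scope ring_scope.
Variable R : numFieldType.

Lemma exists_nonroot (f : {poly R}) : f != 0 -> exists t, ~~ root f t.
Proof.
move=> f0; apply/not_existsP => allroot.
suff : (size ([seq i%:R | i <- iota 0 (size f)] : seq R) < size f)%N.
  by rewrite size_map size_iota ltnn.
apply: max_poly_roots f0 _ _.
  by apply/allP => _ /mapP [i _ ->]; apply/negPn/negP/allroot.
by rewrite map_inj_uniq ?iota_uniq // => i j /eqP; rewrite eqr_nat => /eqP.
Qed.

Lemma exists_nonroot_seq (I : eqType) (s : seq I) (P : I -> R -> Prop) :
  (forall i, exists2 f : {poly R}, f != 0 & forall t, ~~ root f t -> P i t) ->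
  exists2 f : {poly R}, f != 0 & forall t, ~~ root f t -> forall i, i \in s -> P i t.
Proof.
move=> polyP; elim: s => [|i s [f f0 fP]]; first by exists 1; rewrite ?oner_neq0.
have [g g0 gP] := polyP i; exists (g * f); first by rewrite mulf_neq0.
move=> t; rewrite rootM negb_or => /andP [gt ft] j; rewrite inE => /orP [/eqP -> //|js].
  exact: gP.
exact: fP.
Qed.

Lemma rank_pencil_generic m n (A B : 'M[R]_(m, n)) (t0 : R) :
  exists2 f : {poly R}, f != 0 &
    forall t, ~~ root f t -> (\rank (A + t0 *: B)%R <= \rank (A + t *: B)%R)%N.
Proof.
set C := A + t0 *: B; set r := \rank C.
set L := (pid_mx r : 'M[R]_(r, m)) *m invmx (col_ebase C).
set Q := invmx (row_ebase C) *m (pid_mx r : 'M[R]_(n, r)).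
have LCQ : L *m C *m Q = 1%:M.
  rewrite /L /Q -{2}(mulmx_ebase C) -/r !mulmxA mulmxKV ?col_ebase_unit //.
  rewrite -(mulmxA _ (row_ebase C)) mulmxV ?row_ebase_unit // mulmx1 !mul_pid_mx !minnn.
  by rewrite (minn_idPr (rank_leq_row C)) minnn (minn_idPr (rank_leq_col C)) pid_mx_1.
(* f t is the determinant of the r x r minor of A + t B cut out by L and Q; f t0 = 1 *)
set f := \det (map_mx polyC (L *m A *m Q) + 'X *: map_mx polyC (L *m B *m Q)).
have fE t : f.[t] = \det (L *m (A + t *: B) *m Q).
  rewrite -horner_evalE -det_map_mx; congr (\det _).
  rewrite mulmxDr mulmxDl -scalemxAr -scalemxAl.
  apply/matrixP => i j; rewrite !mxE /= horner_evalE.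
  by rewrite hornerD hornerM hornerX !hornerC mulrC.
exists f.
  by apply: contra_neq (oner_neq0 R) => f0; rewrite -(det1 _ r) -LCQ -fE f0 horner0.
move=> t ft; have : L *m (A + t *: B) *m Q \in unitmx by rewrite unitmxE unitfE -fE.
move/mxrank_unit => rk; have := mxrankM_maxl (L *m (A + t *: B)) Q; rewrite rk => le_r.
exact: leq_trans le_r (mxrankM_maxr L _).
Qed.

Variables (V : finType) (d : nat).
Local Notation conf := (V -> 'I_d -> R).

Definition lerp (p q : conf) (t : R) : conf := fun v k => p v k + t * (q v k - p v k).

Variables (I : finType) (m n : I -> nat) (M : forall i, conf -> 'M[R]_(m i, n i)).
Hypothesis M_affine : forall i p q t, M i (lerp p q t) = M i p + t *: (M i q - M i p).

Lemma exists_max_rank i : exists p : conf, forall q, (\rank (M i q) <= \rank (M i p))%N.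
Proof.
pose attained k := `[< exists p, \rank (M i p) = k >].
have exk : exists k, attained k.
  by exists (\rank (M i (fun _ _ => 0))); apply/asboolP; exists (fun _ _ => 0).
have boundk k : attained k -> (k <= n i)%N by move=> /asboolP [p <-]; exact: rank_leq_col.
case: (ex_maxnP exk boundk) => k /asboolP [p <-] maxk.
by exists p => q; apply: maxk; apply/asboolP; exists q.
Qed.

Lemma rank_lerp_generic i p q t0 : exists2 f : {poly R}, f != 0 &
  forall t, ~~ root f t -> (\rank (M i (lerp p q t0)) <= \rank (M i (lerp p q t)))%N.
Proof.
have [f f0 fP] := rank_pencil_generic (M i p) (M i q - M i p) t0.
by exists f => // t ft; rewrite !M_affine; exact: fP.
Qed.

Lemma exists_generic_conf : exists p : conf, forall i q, (\rank (M i q) <= \rank (M i p))%N.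
Proof.
suff [p maxp] : exists p : conf,
    forall i, i \in enum I -> forall q, (\rank (M i q) <= \rank (M i p))%N.
  by exists p => i; apply: maxp; rewrite mem_enum.
elim: (enum I) => [|i0 s [p maxp]]; first by exists (fun _ _ => 0).
(* on the line from p to a maximizer q of M i0, no rank falls below its value at
   p or q except at finitely many points *)
have [q maxq] := exists_max_rank i0.
have [f f0 fP] := exists_nonroot_seq s (fun i => rank_lerp_generic i p q 0).
have [g g0 gP] := rank_lerp_generic i0 p q 1.
have [t] := exists_nonroot (mulf_neq0 g0 f0); rewrite rootM negb_or => /andP [gt ft].
exists (lerp p q t) => i; rewrite inE => /orP [/eqP -> | i_s] q'.
  by apply: leq_trans (maxq q') _; move: (gP t gt); rewrite !M_affine scale1r addrC subrK.
by apply: leq_trans (maxp i i_s q') _; move: (fP t ft i i_s); rewrite M_affine scale0r addr0.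
Qed.

End GenericConfiguration.

Lemma other_end_pair (V : finType) (u v : V) : u != v -> other_end [set u; v] u = v.
Proof.
move=> uv; rewrite /other_end; case: pickP => [x|none] /=.
  by rewrite !inE => /andP [xu /orP [/eqP xu'|/eqP //]]; rewrite xu' eqxx in xu.
by have := none v; rewrite !inE eqxx orbT andbT eq_sym uv.
Qed.

Lemma pair_other_end (V : finType) (S : {set V}) a : #|S| = 2%N -> a \in S ->
  [/\ other_end S a \in S, other_end S a != a & S = [set a; other_end S a]].
Proof.
move=> /eqP /cards2P [u [v [uv ->]]]; rewrite !inE => /orP [] /eqP ->.
  by rewrite other_end_pair //; split; rewrite // ?inE ?eqxx ?orbT // eq_sym.
by rewrite setUC other_end_pair 1?eq_sym //; split; rewrite // ?inE ?eqxx // eq_sym.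
Qed.

Section RigidityMatrixRank.
Variables (R : realType) (V : finType) (d : nat) (p : V -> 'I_d -> R).
Local Notation M F := (rigidity_matrix p F).

Lemma row_rigidity_matrix (F : {set {set V}}) i :
  row i (M F) = if enum_val i \in F then row i (M setT) else 0%R.
Proof.
apply/rowP => j; rewrite !mxE.
by case iF: (enum_val i \in F); rewrite ?mxE; cbv zeta; rewrite ?in_setT ?iF.
Qed.

Lemma rigidity_matrixS (F G : {set {set V}}) : F \subset G -> (M F <= M G)%MS.
Proof.
move=> sFG; apply/row_subP => i; rewrite row_rigidity_matrix.
case: ifP => [iF|_]; last exact: sub0mx.
by rewrite -[row i (M setT)](_ : row i (M G) = _) ?row_sub // row_rigidity_matrix (subsetP sFG).
Qed.

Lemma rigidity_matrixU (F G : {set {set V}}) : (M (F :|: G) <= M F + M G)%MS.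
Proof.
apply/row_subP => i; rewrite row_rigidity_matrix inE.
have rowE (H : {set {set V}}) : enum_val i \in H -> row i (M setT) = row i (M H).
  by move=> iH; rewrite [RHS]row_rigidity_matrix iH.
case iF: (enum_val i \in F) => /=.
  by rewrite (rowE F iF); apply: submx_trans (row_sub _ _) (addsmxSl _ _).
case iG: (enum_val i \in G); last exact: sub0mx.
by rewrite (rowE G iG); apply: submx_trans (row_sub _ _) (addsmxSr _ _).
Qed.

Lemma rank_rigidity_matrix_le_card (F : {set {set V}}) : (\rank (M F) <= #|F|)%N.
Proof.
suff rank_le_size s : (\rank (M [set:: s]) <= size s)%N.
  by rewrite cardE -{1}(set_enum F) rank_le_size.
elim: s => [|S s IH].
  by rewrite set_nil (_ : M set0 = 0%R) ?mxrank0 //; apply/matrixP => i j; rewrite !mxE /= inE.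
rewrite set_cons /=; apply: leq_trans (mxrankS (rigidity_matrixU _ _)) _.
apply: leq_trans (mxrank_adds_leqif _ _) _; rewrite -add1n leq_add //.
apply: leq_trans (rank_leq_row (row (enum_rank S) (M setT))); apply: mxrankS.
apply/row_subP => i; rewrite row_rigidity_matrix inE.
by case: eqP => [<-|_]; rewrite ?enum_valK ?submx_refl ?sub0mx.
Qed.

Lemma rank_rigidity_matrixS (F G : {set {set V}}) :
  F \subset G -> (\rank (M F) <= \rank (M G))%N.
Proof. by move=> sFG; apply: mxrankS; exact: rigidity_matrixS. Qed.

Lemma rank_rigidity_matrix_submod (F G : {set {set V}}) :
  (\rank (M (F :|: G)) + \rank (M (F :&: G)) <= \rank (M F) + \rank (M G))%N.
Proof.
rewrite -[X in (_ <= X)%N]mxrank_sum_cap; apply: leq_add; apply: mxrankS.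
  exact: rigidity_matrixU.
by rewrite sub_capmx !rigidity_matrixS ?subsetIl ?subsetIr.
Qed.

End RigidityMatrixRank.

Lemma quad_form_skew (R : numDomainType) n (S : 'I_n -> 'I_n -> R) (x : 'I_n -> R) :
  (forall k j, S k j = - S j k)%R -> (\sum_k x k * \sum_j S k j * x j = 0)%R.
Proof.
move=> skewS; set s := (\sum_k _)%R.
have sE : s = (\sum_k \sum_j x k * S k j * x j)%R.
  by apply: eq_bigr => k _; rewrite mulr_sumr; apply: eq_bigr => j _; rewrite mulrA.
have : (s = - s)%R.
  rewrite {1}sE exchange_big /= /s -sumrN; apply: eq_bigr => k _.
  rewrite mulr_sumr -sumrN; apply: eq_bigr => j _.
  by rewrite skewS; ring.
by move/eqP; rewrite -subr_eq0 opprK -mulr2n mulrn_eq0 /= => /eqP.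
Qed.

Section TrivialMotions.
Local Open Scope ring_scope.
Variables (R : realType) (V : finType) (d : nat).
Implicit Types (p m : V -> 'I_d -> R).

Lemma edge_row_annihilates_motion p m (S : {set V}) : #|S| = 2%N ->
  (forall u v, \sum_k (p u k - p v k) * (m u k - m v k) = 0) ->
  \sum_w \sum_k (if w \in S then p w k - p (other_end S w) k else 0) * m w k = 0.
Proof.
move=> /eqP /cards2P [u [v [uv ->]]] motion_m.
rewrite -[RHS](motion_m u v) (bigD1 u) ?inE ?eqxx //= (bigD1 v) ?inE ?eqxx ?orbT 1?eq_sym //=.
rewrite [X in _ + (_ + X)]big1 => [|w /andP [wu wv]]; last first.
  by apply: big1 => k _; rewrite !inE (negbTE wu) (negbTE wv) mul0r.
rewrite addr0 -big_split /= other_end_pair // setUC other_end_pair 1?eq_sym //.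
by apply: eq_bigr => k _; ring.
Qed.

Definition pair_set := {A : {set 'I_d} | #|A| == 2%N}.
Definition motion_index := ('I_d + pair_set)%type.

Definition rot_coef (A : {set 'I_d}) (k j : 'I_d) : R :=
  if enum A is [:: a; b] then (k == a)%:R * (j == b)%:R - (k == b)%:R * (j == a)%:R else 0.

(* [inl c] is the translation along the c-th axis, [inr {a, b}] the
   infinitesimal rotation in the (a, b)-plane. *)
Definition trivial_motion p (i : motion_index) (w : V) (k : 'I_d) : R :=
  match i with inl c => (k == c)%:R | inr A => \sum_j rot_coef (val A) k j * p w j end.

Lemma rot_coef_skew A k j : rot_coef A k j = - rot_coef A j k.
Proof. by rewrite /rot_coef; case: (enum A) => [|a [|b [|c l]]] /=; rewrite ?oppr0 //; ring. Qed.

Lemma trivial_motion_isometry p i u v :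
  \sum_k (p u k - p v k) * (trivial_motion p i u k - trivial_motion p i v k) = 0.
Proof.
case: i => [c|A] /=; first by apply: big1 => k _; rewrite subrr mulr0.
rewrite -[RHS](@quad_form_skew _ _ (rot_coef (val A)) (fun k => p u k - p v k)).
  apply: eq_bigr => k _; congr (_ * _); rewrite -sumrB.
  by apply: eq_bigr => j _; rewrite mulrBr.
exact: rot_coef_skew.
Qed.

Lemma card_motion_index : #|{: motion_index}| = 'C(d.+1, 2).
Proof.
rewrite card_sum card_ord card_sig binS bin1 addnC.
have := card_draws 'I_d 2; rewrite card_ord => <-.
by congr (_ + _); apply: eq_card => A; rewrite !inE.
Qed.

Lemma enum_pair (A : pair_set) : exists a b, a != b /\ enum (val A) = [:: a; b].
Proof.
case: A => X /= /eqP cX; move: (enum_uniq (mem X)) (cardE X); rewrite cX.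
by case: (enum X) => [|a [|b [|c l]]] //= /andP [ab _] _; exists a, b; rewrite inE in ab.
Qed.

Lemma enum_set2 (X : {set 'I_d}) a b : enum X = [:: a; b] -> X = [set a; b].
Proof. by move=> e; apply/setP => x; rewrite -mem_enum e !inE. Qed.

Lemma rot_coef_pair (A A' : pair_set) a b : enum (val A) = [:: a; b] -> a != b ->
  rot_coef (val A') a b = (A' == A)%:R.
Proof.
move=> eA ab; have [a' [b' [_ eA']]] := enum_pair A'.
rewrite /rot_coef eA' -!natrM !mulnb.
have [eqA|neA] := eqVneq A' A.
  by move: eA'; rewrite eqA eA => -[<- <-]; rewrite !eqxx (negbTE ab) eq_sym (negbTE ab) subr0.
have : [set a'; b'] != [set a; b] by rewrite -(enum_set2 eA) -(enum_set2 eA') (inj_eq val_inj).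
move=> neq.
have -> : (a == a') && (b == b') = false by apply: contraNF neq => /andP [/eqP -> /eqP ->].
have -> : (a == b') && (b == a') = false.
  by apply: contraNF neq => /andP [/eqP -> /eqP ->]; rewrite setUC.
by rewrite subrr.
Qed.

Definition frame_mx p (vv : 'I_d.+1 -> V) : 'M[R]_d :=
  \matrix_(i, j) (p (vv (lift ord0 i)) j - p (vv ord0) j).

Lemma trivial_motion_indep p (vv : 'I_d.+1 -> V) (al : motion_index -> R) :
  frame_mx p vv \in unitmx ->
  (forall w k, \sum_i al i * trivial_motion p i w k = 0) -> forall i, al i = 0.
Proof.
move=> uW comb0.
pose S k j := \sum_(A : pair_set) al (inr A) * rot_coef (val A) k j.
have affine0 w k : al (inl k) + \sum_j S k j * p w j = 0.
  rewrite -[RHS](comb0 w k) big_sumType /=; congr (_ + _).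
    rewrite (bigD1 k) //= eqxx mulr1 big1 ?addr0 // => c ck.
    by rewrite eq_sym (negbTE ck) mulr0.
  under eq_bigr do rewrite /S mulr_suml.
  rewrite exchange_big /=; apply: eq_bigr => A _; rewrite mulr_sumr.
  by apply: eq_bigr => j _; rewrite mulrA.
(* the affine map w |-> al (inl _) + S p(w) vanishes on an affine frame, so S = 0 *)
have S0 k j : S k j = 0.
  have SW0 : \matrix_(k, j) S k j *m (frame_mx p vv)^T = 0.
    apply/matrixP => k' i; rewrite !mxE.
    under eq_bigr do rewrite !mxE mulrBr.
    rewrite sumrB; apply/eqP; rewrite subr_eq0; apply/eqP.
    by apply: (addrI (al (inl k'))); rewrite !affine0.
  have := congr1 (mulmx^~ (invmx (frame_mx p vv)^T)) SW0.
  rewrite mulmxK ?unitmx_tr // mul0mx => /matrixP /(_ k j).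
  by rewrite !mxE.
case=> [k|A].
  by have := affine0 (vv ord0) k; rewrite big1 ?addr0 // => j _; rewrite S0 mul0r.
have [a [b [ab eA]]] := enum_pair A.
have := S0 a b; rewrite /S (bigD1 A) //= (rot_coef_pair _ eA ab) eqxx mulr1.
by rewrite big1 ?addr0 // => A' nA'; rewrite (rot_coef_pair _ eA ab) (negbTE nA') mulr0.
Qed.

Lemma sum_enum_val (T : finType) (G : T -> R) :
  \sum_(j < #|{: T}|) G (enum_val j) = \sum_x G x.
Proof. by rewrite -(big_enum_val G). Qed.

Definition motion_mx p : 'M[R]_(#|{: motion_index}|, #|{: V * 'I_d}|) :=
  \matrix_(i, j) trivial_motion p (enum_val i) (enum_val j).1 (enum_val j).2.

Lemma motion_mx_orthogonal p (F : {set {set V}}) :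
  (forall S, S \in F -> #|S| = 2%N) -> motion_mx p *m (rigidity_matrix p F)^T = 0.
Proof.
move=> edgeF; apply/matrixP => i s; rewrite !mxE.
case sF: (enum_val s \in F); last by apply: big1 => j _; rewrite !mxE /= sF mulr0.
pose H w k := (if w \in enum_val s then p w k - p (other_end (enum_val s) w) k else 0) *
  trivial_motion p (enum_val i) w k.
rewrite (eq_bigr (fun j => (fun x => H x.1 x.2) (enum_val j))) => [|j _].
  rewrite (sum_enum_val (fun x => H x.1 x.2)) -(pair_bigA _ H).
  exact: edge_row_annihilates_motion (edgeF _ sF) (trivial_motion_isometry p (enum_val i)).
by rewrite !mxE /= sF /= mulrC /H.
Qed.

Lemma motion_mx_row_free p (vv : 'I_d.+1 -> V) :
  frame_mx p vv \in unitmx -> row_free (motion_mx p).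
Proof.
move=> uW; rewrite -kermx_eq0; apply/eqP/matrixP => r c; rewrite [RHS]mxE.
pose al := row r (kermx (motion_mx p)).
have alX : al *m motion_mx p = 0 by rewrite /al -row_mul mulmx_ker row0.
have comb0 w k : \sum_i al 0 (enum_rank i) * trivial_motion p i w k = 0.
  have := congr1 (fun M : 'rV[R]_#|{: V * 'I_d}| => M 0 (enum_rank (w, k))) alX.
  rewrite !mxE => alwk; rewrite -[RHS]alwk.
  rewrite -(sum_enum_val (fun i => al 0 (enum_rank i) * trivial_motion p i w k)).
  by apply: eq_bigr => j _; rewrite enum_valK !mxE enum_rankK.
by have := trivial_motion_indep uW comb0 (enum_val c); rewrite enum_valK mxE.
Qed.

Lemma rank_rigidity_matrix_add_trivial_le p (vv : 'I_d.+1 -> V) (F : {set {set V}}) :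
  frame_mx p vv \in unitmx -> (forall S, S \in F -> #|S| = 2%N) ->
  (\rank (rigidity_matrix p F) + 'C(d.+1, 2) <= #|V| * d)%N.
Proof.
move=> uW edgeF.
have : (motion_mx p <= kermx (rigidity_matrix p F)^T)%MS.
  by rewrite sub_kermx motion_mx_orthogonal.
move/mxrankS; rewrite mxrank_ker mxrank_tr (eqP (motion_mx_row_free uW)) card_motion_index.
have := rank_leq_col (rigidity_matrix p F).
by move: (\rank _) => rk; rewrite card_prod card_ord; lia.
Qed.

End TrivialMotions.

Section FewVertices.
Local Open Scope ring_scope.
Variables (R : realType) (V : finType) (d : nat).

Definition axis_conf (io : V -> 'I_d) : V -> 'I_d -> R := fun v k => (k == io v)%:R.

Lemma axis_conf_entry (F : {set {set V}}) (io : V -> 'I_d) S S' a :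
  (forall S, S \in F -> #|S| = 2%N) -> {in verts F &, injective io} ->
  S \in F -> S' \in F -> a \in S' ->
  rigidity_matrix (axis_conf io) F (enum_rank S) (enum_rank (a, io (other_end S' a))) =
  - (S == S')%:R.
Proof.
move=> edgeF io_inj SF S'F aS'.
have inV T v : T \in F -> v \in T -> v \in verts F by move=> TF vT; apply/bigcupP; exists T.
have [bS' ba eS'] := pair_other_end (edgeF _ S'F) aS'; set b := other_end S' a in bS' ba eS' *.
have io_ab : (io b == io a) = false.
  by apply: contraNF ba => /eqP /io_inj -> //; [exact: inV bS' | exact: inV aS'].
rewrite mxE /= !enum_rankK SF /= /axis_conf io_ab sub0r.
case aS: (a \in S); last first.
  by have [SS'|_] := eqVneq S S'; [rewrite SS' aS' in aS | rewrite oppr0].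
have [cS _ eS] := pair_other_end (edgeF _ SF) aS.
rewrite (inj_in_eq io_inj) ?(inV _ _ S'F bS') ?(inV _ _ SF cS) //.
congr (_ *- nat_of_bool _); apply/idP/idP => [/eqP bc|/eqP SS']; apply/eqP.
  by rewrite eS eS' bc.
by rewrite /b SS'.
Qed.

Lemma rank_axis_conf (F : {set {set V}}) (io : V -> 'I_d) :
  (forall S, S \in F -> #|S| = 2%N) -> {in verts F &, injective io} ->
  (#|F| <= rank_at (axis_conf io) F)%N.
Proof.
move=> edgeF io_inj.
have [->|[S0 S0F]] := set_0Vmem F; first by rewrite cards0.
have nonempty S : S \in F -> S != set0 by move=> SF; rewrite -card_gt0 edgeF.
have [x0 _] := set0Pn _ (nonempty _ S0F).
pose a (S : {set V}) := odflt x0 [pick x in S].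
have aS S : S \in F -> a S \in S.
  move=> SF; rewrite /a; case: pickP => // none.
  by have [x xS] := set0Pn _ (nonempty _ SF); have := none x; rewrite xS.
pose row_of (i : 'I_#|F|) := enum_rank (enum_val i).
pose col_of (i : 'I_#|F|) :=
  enum_rank (a (enum_val i), io (other_end (enum_val i) (a (enum_val i)))).
pose N := mxsub row_of col_of (rigidity_matrix (axis_conf io) F).
have NEij i j : N i j = - (i == j)%:R.
  rewrite mxE axis_conf_entry ?aS ?enum_valP //.
  by congr (1 *- nat_of_bool _); apply: inj_eq; exact: enum_val_inj.
have NE : N = - 1%:M by apply/matrixP => i j; rewrite NEij !mxE.
have : \rank N = #|F| by rewrite NE mxrank_opp mxrank1.
rewrite /rank_at => <-; rewrite /N mxsubrc; apply: leq_trans (mxrankS (rowsub_sub _ _)) _.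
by rewrite -[X in colsub _ X]mulmx1 -mulmx_colsub mxrankM_maxl.
Qed.

Lemma few_vertices_independent (F : {set {set V}}) :
  (forall S, S \in F -> #|S| = 2%N) -> (#|verts F| <= d)%N ->
  exists p : V -> 'I_d -> R, (#|F| <= rank_at p F)%N.
Proof.
move=> edgeF few.
have [->|[S0 S0F]] := set_0Vmem F; first by exists (fun _ _ => 0); rewrite cards0.
have [x0 x0S0] : exists x0, x0 \in S0 by apply/set0Pn; rewrite -card_gt0 edgeF.
have x0F : x0 \in verts F by apply/bigcupP; exists S0.
pose io v := widen_ord few (enum_rank_in x0F v).
exists (axis_conf io); apply: rank_axis_conf => // v w vF wF /(congr1 val) /= /val_inj ioE.
by rewrite -(enum_rankK_in x0F vF) -(enum_rankK_in x0F wF) ioE.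
Qed.

End FewVertices.

Section GenericRank.
Variables (R : realType) (V : finType) (d : nat).
Local Notation rd := (rd R d).
Implicit Types (p q : V -> 'I_d -> R) (F G : {set {set V}}).

Lemma rigidity_matrix_affine (F : {set {set V}}) p q (t : R) :
  rigidity_matrix (lerp p q t) F =
  (rigidity_matrix p F + t *: (rigidity_matrix q F - rigidity_matrix p F))%R.
Proof. by apply/matrixP => i j; rewrite !mxE /=; case: ifP => _; rewrite /lerp; ring. Qed.

Lemma frame_mx_affine (vv : 'I_d.+1 -> V) p q (t : R) :
  frame_mx (lerp p q t) vv = (frame_mx p vv + t *: (frame_mx q vv - frame_mx p vv))%R.
Proof. by apply/matrixP => i j; rewrite !mxE /lerp; ring. Qed.

Lemma rd_max (F : {set {set V}}) (p : V -> 'I_d -> R) :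
  (forall q, rank_at q F <= rank_at p F) -> rd F = rank_at p F.
Proof.
move=> maxp; rewrite /rd; case: ex_maxnP => n /asboolP [q <-] maxn.
by apply/eqP; rewrite eqn_leq maxp maxn //; apply/asboolP; exists p.
Qed.

Lemma rank_at_le_rd F p : rank_at p F <= rd F.
Proof. by rewrite /rd; case: ex_maxnP => n _; apply; apply/asboolP; exists p. Qed.

Lemma exists_generic_realization : exists p, forall F, rd F = rank_at p F.
Proof.
have [p maxp] :=
  exists_generic_conf (M := fun F p => rigidity_matrix p F) (@rigidity_matrix_affine).
by exists p => F; apply: rd_max => q; exact: maxp.
Qed.

Lemma rd_le_card F : rd F <= #|F|.
Proof. by have [p ->] := exists_generic_realization; exact: rank_rigidity_matrix_le_card. Qed.

Lemma rd_mono F G : F \subset G -> rd F <= rd G.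
Proof.
by have [p rdE] := exists_generic_realization; rewrite !rdE; exact: rank_rigidity_matrixS.
Qed.

Lemma rd_submod F G : rd (F :|: G) + rd (F :&: G) <= rd F + rd G.
Proof. by have [p rdE] := exists_generic_realization; rewrite !rdE rank_rigidity_matrix_submod. Qed.

Definition standard_frame_conf (vv : 'I_d.+1 -> V) : V -> 'I_d -> R :=
  fun v k => (v == vv (lift ord0 k))%:R%R.

Lemma frame_mx_standard (vv : 'I_d.+1 -> V) : injective vv ->
  frame_mx (standard_frame_conf vv) vv = 1%:M%R.
Proof.
move=> vv_inj; apply/matrixP => i j; rewrite !mxE /standard_frame_conf !(inj_eq vv_inj).
rewrite (inj_eq (@lift_inj _ ord0)).
by rewrite eq_sym (negbTE (neq_lift _ _)) subr0 eq_sym.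
Qed.

Lemma rd_add_trivial_motions_le (E : {set {set V}}) : d.+1 <= #|V| ->
  (forall e, e \in E -> #|e| = 2) -> rd E + 'C(d.+1, 2) <= #|V| * d.
Proof.
move=> V_large edgeE.
pose vv (i : 'I_d.+1) := enum_val (widen_ord V_large i).
have vv_inj : injective vv by move=> i j /enum_val_inj /(congr1 val) /= /val_inj.
(* a realization generic for the frame matrix of d+1 distinct vertices as well *)
pose m (i : option {set {set V}}) := if i is Some _ then #|{: {set V}}| else d.
pose n (i : option {set {set V}}) := if i is Some _ then #|{: V * 'I_d}| else d.
pose M i p : 'M[R]_(m i, n i) :=
  match i as j return 'M_(m j, n j) with Some F => rigidity_matrix p F | None => frame_mx p vv end.
have [p maxp] : exists p, forall i q, \rank (M i q) <= \rank (M i p).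
  apply: exists_generic_conf => -[F|] q q' t /=.
    exact: rigidity_matrix_affine.
  exact: frame_mx_affine.
have unit_frame : frame_mx p vv \in unitmx.
  rewrite -row_full_unit /row_full eqn_leq rank_leq_col /=.
  by have := maxp None (standard_frame_conf vv); rewrite /= frame_mx_standard // mxrank1.
rewrite (rd_max (maxp (Some E))); exact: rank_rigidity_matrix_add_trivial_le unit_frame edgeE.
Qed.

End GenericRank.

Lemma sum_card_exchange (I T : finType) (P : {pred I}) (A : I -> {set T}) :
  \sum_(i in P) #|A i| = \sum_t #|[set i in P | t \in A i]|.
Proof.
have card_sum (U : finType) (B : {set U}) : #|B| = \sum_u (u \in B : nat).
  by rewrite -sum1_card big_mkcond /=; apply: eq_bigr => u _; case: (u \in B).
rewrite (eq_bigr _ (fun i _ => card_sum _ (A i))) exchange_big /=.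
apply: eq_bigr => t _; rewrite card_sum big_mkcond /=.
by apply: eq_bigr => i _; rewrite inE; case: (i \in P).
Qed.

Section SharedVertices.
Variables (V : finType) (E : {set {set V}}) (P : {set {set {set V}}}) (k : nat).
Hypothesis partP : partition P E.
Hypothesis coverV : forall x : V, exists2 e, e \in E & x \in e.
Hypothesis large_blocks : forall H, H \in P -> k <= #|verts H|.
Hypothesis two_blocks : 1 < #|P|.
Hypothesis connE : forall X : {set V}, #|X| < k -> connected_minus E X.

Definition block_count (v : V) := #|[set H in P | v \in verts H]|.
Definition shared_verts (H : {set {set V}}) := [set v in verts H | 1 < block_count v].

Lemma block_count_gt0 v : 0 < block_count v.
Proof.
have [e eE ve] := coverV v; move: eE; rewrite -(cover_partition partP) => /bigcupP [H HP eH].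
by rewrite card_gt0; apply/set0Pn; exists H; rewrite inE HP; apply/bigcupP; exists e.
Qed.

Lemma shared_of_two_blocks H H' v : H \in P -> H' \in P -> H != H' ->
  v \in verts H -> v \in verts H' -> v \in shared_verts H.
Proof.
move=> HP H'P HH' vH vH'; rewrite inE vH /=.
have : [set H; H'] \subset [set K in P | v \in verts K].
  by apply/subsetP => K; rewrite !inE => /orP [] /eqP ->; rewrite ?HP ?H'P.
by move/subset_leq_card; rewrite cards2 HH'.
Qed.

Lemma unshared_edge_in_block H x y : H \in P -> [set x; y] \in E ->
  x \in verts H -> x \notin shared_verts H -> y \in verts H.
Proof.
move=> HP xyE xH xS; move: xyE; rewrite -(cover_partition partP) => /bigcupP [K KP xyK].
have [<-|KH] := eqVneq K H; first by apply/bigcupP; exists [set x; y]; rewrite // !inE eqxx orbT.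
have xK : x \in verts K by apply/bigcupP; exists [set x; y]; rewrite // !inE eqxx.
by rewrite (shared_of_two_blocks HP KP _ xH xK) // eq_sym in xS.
Qed.

Lemma shared_verts_large H : H \in P -> k <= #|shared_verts H|.
Proof.
move=> HP; rewrite leqNgt; apply/negP => few_shared.
have unshared H0 : H0 \in P -> exists2 u, u \in verts H0 & u \notin shared_verts H.
  move=> H0P; apply/subsetPn; apply: contraTN few_shared => /subset_leq_card.
  by rewrite -leqNgt; apply: leq_trans (large_blocks H0P).
have [H' H'P] : exists2 H', H' \in P & H' \notin [set H].
  by apply/subsetPn; apply: contraTN two_blocks => /subset_leq_card; rewrite cards1 -leqNgt.
rewrite inE => H'H; have [u uH uS] := unshared H HP; have [w wH' wS] := unshared H' H'P.
have wH : w \notin verts H.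
  by apply/negP => wH; rewrite (shared_of_two_blocks HP H'P _ wH wH') 1?eq_sym in wS.
(* a path avoiding the shared vertices of H never leaves H *)
case/connectP: (connE few_shared uS wS) => s pth wE.
suff : last u s \in verts H by rewrite -wE (negbTE wH).
elim: s u uH uS pth {wE} => [//|y s IH] x xH xS /= /andP [/and3P [_ yS xyE] pth].
exact: IH (unshared_edge_in_block HP xyE xH xS) yS pth.
Qed.

Lemma sum_verts_blocks_ge : 2 * #|V| + #|P| * k <= 2 * \sum_(H in P) #|verts H|.
Proof.
have countE : \sum_(H in P) #|verts H| = \sum_v block_count v by exact: sum_card_exchange.
have sharedE : \sum_(H in P) #|shared_verts H| =
    \sum_v (if 1 < block_count v then block_count v else 0).
  rewrite sum_card_exchange; apply: eq_bigr => v _; case: ifP => shared_v.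
    by apply: eq_card => H; rewrite !inE shared_v andbT.
  by apply/eqP; rewrite cards_eq0; apply/eqP/setP => H; rewrite !inE shared_v !andbF.
have : #|P| * k <= \sum_(H in P) #|shared_verts H|.
  by rewrite -sum_nat_const; apply: leq_sum => H HP; exact: shared_verts_large.
move=> le_shared; apply: leq_trans (leq_add (leqnn _) le_shared) _.
have -> : 2 * #|V| = \sum_(v : V) 2 by rewrite sum_nat_const mulnC.
rewrite sharedE countE big_distrr -big_split /=; apply: leq_sum => v _.
by have := block_count_gt0 v; case: ifP; lia.
Qed.

End SharedVertices.

Section Components.
Variables (R : realType) (V : finType) (d : nat) (E : {set {set V}}).
Hypothesis edgeE : forall e, e \in E -> #|e| = 2.
Local Notation rd := (rd R d).
Local Notation rd_circuit := (is_circuit rd).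

Lemma rd_circuit_rel_equiv : equivalence_rel (circuit_rel rd E).
Proof. exact: circuit_rel_equiv (rd_le_card R d) (@rd_mono R V d) (@rd_submod R V d) E. Qed.

Lemma M_components_partition : partition (M_components R d E) E.
Proof. exact: equivalence_partitionP (in3W rd_circuit_rel_equiv). Qed.

Lemma sum_rd_components_le : \sum_(H in M_components R d E) rd H <= rd E.
Proof. exact: (sum_rank_components_le (rd_le_card R d) (@rd_mono R V d) (@rd_submod R V d) E). Qed.

Lemma redundant_edge_in_circuit e : d.+1 <= #|V| -> redundantly_rigid R d E -> e \in E ->
  exists C : {set {set V}}, [/\ C \subset E, e \in C & rd_circuit C].
Proof.
move=> V_large redundant eE.
apply: (circuit_of_rank_delete (rd_le_card R d) (@rd_mono R V d) (@rd_submod R V d) eE).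
have := redundant e eE; rewrite /rigid V_large => rd_Ee.
have := rd_add_trivial_motions_le R V_large edgeE; have := rd_mono R d (subD1set E e).
by rewrite rd_Ee mulnC; lia.
Qed.

Lemma circuit_verts_gt (C : {set {set V}}) : C \subset E -> rd_circuit C -> d < #|verts C|.
Proof.
move=> sCE /is_circuitP [dC _]; rewrite ltnNge; apply/negP => few.
have [p le_C] := few_vertices_independent R (fun S SC => edgeE (subsetP sCE S SC)) few.
by have := leq_trans le_C (rank_at_le_rd C p); rewrite leqNgt dC.
Qed.

Lemma vertsS (F G : {set {set V}}) : F \subset G -> verts F \subset verts G.
Proof.
move=> sFG; apply/subsetP => v /bigcupP [e eF ve].
by apply/bigcupP; exists e; rewrite ?(subsetP sFG).
Qed.

Lemma component_verts_gt H : d.+1 <= #|V| -> redundantly_rigid R d E ->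
  H \in M_components R d E -> d < #|verts H|.
Proof.
move=> V_large redundant HP.
have partP := M_components_partition.
have [x xH] := set0Pn _ (partition_neq0 partP HP); have xE := subsetP (partitionS partP HP) x xH.
have [C [sCE xC cC]] := redundant_edge_in_circuit V_large redundant xE.
apply: leq_trans (circuit_verts_gt sCE cC) (subset_leq_card (vertsS _)).
rewrite -(def_pblock (partition_trivIset partP) HP xH).
exact: (circuit_sub_pblock (rd_le_card R d) (@rd_mono R V d) (@rd_submod R V d) sCE cC xC).
Qed.

Lemma two_components : M_separable R d E -> 1 < #|M_components R d E|.
Proof.
rewrite /M_separable /M_connected negb_forall_in => /existsP [e /andP [eE]].
rewrite negb_forall_in => /existsP [f /andP [fE not_ef]].
set P := M_components R d E.
have partP : partition P E := M_components_partition.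
have inP x : x \in E -> pblock P x \in P by move=> xE; rewrite pblock_mem ?(cover_partition partP).
have neq_ef : pblock P e != pblock P f.
  apply: contraNneq not_ef => eq_ef.
  have := pblock_equivalence_partition (in3W rd_circuit_rel_equiv) eE fE.
  by rewrite -/P eq_ef mem_pblock (cover_partition partP) fE => /esym ef; exact: ef.
have : [set pblock P e; pblock P f] \subset P.
  by apply/subsetP => H; rewrite !inE => /orP [] /eqP ->; exact: inP.
by move/subset_leq_card; rewrite cards2 neq_ef.
Qed.

End Components.

Lemma connected_vertex_on_edge (V : finType) (E : {set {set V}}) :
  1 < #|V| -> connected_minus E set0 -> forall x, exists2 e, e \in E & x \in e.
Proof.
move=> V2 conn x; have [y yx] : exists y, y != x.
  case: (pickP (predC1 x)) => [y yx|all_x]; first by exists y.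
  have : [set: V] \subset [set x] by apply/subsetP => y _; rewrite inE; apply/negPn/negbT/all_x.
  by move/subset_leq_card; rewrite cardsT cards1 leqNgt V2.
case/connectP: (conn x y (negbT (in_set0 x)) (negbT (in_set0 y))) => [[|z s] /= pth yE].
  by rewrite yE eqxx in yx.
by case/andP: pth => /and3P [_ _ xzE] _; exists [set x; z]; rewrite // !inE eqxx.
Qed.

Lemma sum_dof (R : realType) (V : finType) (d : nat) (P : {set {set {set V}}}) :
  (\sum_(H in P) dof R d H =
   Posz (d * \sum_(H in P) #|verts H|)%N - Posz (#|P| * 'C(d.+1, 2))%N
   - Posz (\sum_(H in P) rd R d H)%N)%R.
Proof.
have PoszE (F : {set {set V}} -> nat) : Posz (\sum_(H in P) F H)%N = (\sum_(H in P) Posz (F H))%R.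
  exact: (big_morph Posz PoszD (erefl _)).
by rewrite big_distrr -sum_nat_const !PoszE -!sumrB.
Qed.

Lemma dof_count_arith (d n q T Sr rE : nat) :
  2 * n + q * d.+1 <= 2 * T -> Sr <= rE -> rE + 'C(d.+1, 2) <= n * d ->
  (Posz 'C(d.+1, 2) <= Posz (d * T) - Posz (q * 'C(d.+1, 2)) - Posz Sr)%R.
Proof.
move=> count_verts le_Sr le_rE.
have binE : 'C(d.+1, 2) * 2 = d.+1 * d by rewrite bin2 muln2 halfK oddM /= andNb subn0.
have : d * (2 * n + q * d.+1) <= d * (2 * T) by rewrite leq_mul2l count_verts orbT.
move: ('C(d.+1, 2)) binE le_rE => c; nia.
Qed.

Theorem theorem5p4 (R : realType) (V : finType) (d : nat) (E : {set {set V}}) :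
  1 <= d ->
  (forall e, e \in E -> #|e| = 2) ->
  k_connected d.+1 E ->
  redundantly_rigid R d E ->
  M_separable R d E ->
  (('C(d.+1, 2))%:Z <= \sum_(H in M_components R d E) dof R d H)%R.
Proof.
move=> _ edgeE [V_large connE] redundant separable.
have V_gt_d : d.+1 <= #|V| by apply: ltnW.
have on_edge : forall x, exists2 e, e \in E & x \in e.
  by apply: connected_vertex_on_edge; [lia | apply: connE; rewrite cards0].
rewrite sum_dof; apply: (dof_count_arith (n := #|V|) (rE := rd R d E)).
- apply: sum_verts_blocks_ge (M_components_partition R d E) on_edge _ _ connE.
    by move=> H; exact: (component_verts_gt edgeE V_gt_d redundant).
  exact: two_components separable.
- exact: sum_rd_components_le.
- exact: rd_add_trivial_motions_le.
Qed.
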